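(* For an $(n,k)$ SPC product code, the block error probabilities under SC and Elias' decoding over the BEC($\epsilon$) satisfy $P_{\mathrm{SC}} \leq P_{\mathrm{E}}$.
   Context: Consider an $m$-dimensional $(n,k)$ systematic single parity-check (SPC) product code (each component code along dimension $\ell$ is an $(n_\ell,n_\ell-1)$ SPC code) used over the binary erasure channel BEC($\epsilon$). Successive cancellation (SC) decoding decodes the information bits $u_1,\dots,u_k$ in order, each decision $\hat u_i$ being based on the channel output and the previous decisions $\hat u_1,\dots,\hat u_{i-1}$ (likelihoods computed recursively across dimensions); Elias' decoding decodes the component codes dimension by dimension in one sweep and computes the likelihood of each $u_i$ without using decisions on other information bits. Over the BEC both decoders output an erasure when the two hypotheses are equally likely. $P_{\mathrm{SC}}$ and $P_{\mathrm{E}}$ denote the probabilities that the decoded vector (under SC and Elias' decoding, respectively) differs from the transmitted information vector $\boldsymbol{u}$ (an erasure counts as an error). *)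

From HB Require Import structures.
From mathcomp Require Import all_boot all_order all_algebra.
Set Implicit Arguments. Unset Strict Implicit. Unset Printing Implicit Defensive.
Import Order.TTheory GRing.Theory Num.Theory.

(* m-dimensional arrays.  A code is described by the list of component       *)
(* lengths ns = [:: n_1; ...; n_m]; the component code along dimension l     *)
(* (0-based index l = 0 .. m-1, i.e. the paper's dimension l+1) is the       *)
(* (n_{l+1}, n_{l+1}-1) SPC code.  A position is an m-tuple of indices,      *)
(* represented as nested pairs ('I_n1 * ('I_n2 * ( ... * unit))).            *)

Fixpoint pos (ns : seq nat) : finType :=
  match ns with
  | [::] => unit
  | n :: ns' => ('I_n * pos ns')%type
  end.

Fixpoint same_line (ns : seq nat) (l : nat) : pos ns -> pos ns -> bool :=
  match ns return pos ns -> pos ns -> bool with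
  | [::] => fun _ _ => true
  | n :: ns' => fun p q =>
      match l with
      | 0 => p.2 == q.2
      | l'.+1 => (p.1 == q.1) && same_line l' p.2 q.2
      end
  end.

(* the l-th coordinate of p is the last one, n_l - 1 (the parity index)     *)
Fixpoint is_last (ns : seq nat) (l : nat) : pos ns -> bool :=
  match ns return pos ns -> bool with
  | [::] => fun _ => false
  | n :: ns' => fun p =>
      match l with
      | 0 => val p.1 == n.-1
      | l'.+1 => is_last l' p.2
      end
  end.

Fixpoint info (ns : seq nat) : pos ns -> bool :=
  match ns return pos ns -> bool with
  | [::] => fun _ => true
  | n :: ns' => fun p => (val p.1 < n.-1) && info p.2
  end.

Definition xors (s : seq bool) : bool := foldr addb false s.

Definition parity_fill (ns : seq nat) (l : nat) (c : pos ns -> bool) :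
  pos ns -> bool :=
  fun p => if is_last l p
           then xors [seq c q | q <- enum (pos ns) & same_line l p q && (q != p)]
           else c p.

(* u is the information vector; only its values at info positions matter.  *)
Definition encode (ns : seq nat) (u : pos ns -> bool) : pos ns -> bool :=
  foldl (fun c l => parity_fill l c) (fun p => info p && u p) (iota 0 (size ns)).

(* Binary erasure channel: None = erasure.                                  *)

Definition bec_out (ns : seq nat) (c : pos ns -> bool) (E : {set pos ns}) :
  pos ns -> option bool :=
  fun p => if p \in E then None else Some (c p).

(* specialisation of the check-node (box-plus) likelihood combination.      *)
Definition oxor (s : seq (option bool)) : option bool :=
  foldr (fun a acc => match a, acc with
                      | Some x, Some y => Some (x (+) y)
                      | _, _ => None
                      end) (Some false) s.

(* Elias' decoding: one sweep over the dimensions l = 0..m-1; at dimension  *)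
(* l every line is decoded by the APP decoder of the SPC code, which over   *)
(* the BEC returns a known value for a symbol iff it is known or all other  *)
(* symbols of its line are known.  The decision on each information bit is  *)
(* its final value (erasure = tie).                                         *)

Definition elias_step (ns : seq nat) (l : nat) (y : pos ns -> option bool) :
  pos ns -> option bool :=
  fun p => if y p is Some b then Some b
           else oxor [seq y q | q <- enum (pos ns) & same_line l p q && (q != p)].

Definition elias_dec (ns : seq nat) (y : pos ns -> option bool) :
  pos ns -> option bool :=
  foldl (fun y l => elias_step l y) y (iota 0 (size ns)).

(* Successive cancellation decoding, defined recursively over the           *)
(* dimensions: the code on n_1 :: ns' is an SPC code of length n_1 whose    *)
(* symbols ("rows") are codewords of the code on ns'.  Rows r = 0..n_1-2    *)
(* are decoded in order: the observation of row r at column j is the        *)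
(* channel symbol, combined (check-node rule) with the XOR of the already   *)
(* decided previous rows and the channel symbols of the later rows; row r   *)
(* is then SC-decoded in the code on ns', and its re-encoded estimate is    *)
(* used for the following rows.  The parity row is re-encoded at the end.   *)
(* The function returns the re-encoded estimate on every position; the      *)
(* decisions on the information bits are its values at info positions.     *)

Fixpoint sc_dec (ns : seq nat) : (pos ns -> option bool) -> pos ns -> option bool :=
  match ns return (pos ns -> option bool) -> pos ns -> option bool with
  | [::] => fun y => y
  | n :: ns' => fun y =>
      let rows :=
        foldl (fun (d : 'I_n -> pos ns' -> option bool) (r : 'I_n) =>
                 let obs : pos ns' -> option bool := fun j =>
                   if y (r, j) is Some b then Some b
                   else oxor ([seq d r' j | r' <- enum 'I_n & val r' < val r]
                              ++ [seq y (r', j) | r' <- enum 'I_n & val r < val r'])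
                 in
                 let dr := @sc_dec ns' obs in
                 fun r' => if r' == r then dr else d r')
              (fun _ _ => None)
              [seq r <- enum 'I_n | val r < n.-1]
      in
      fun p => if val p.1 < n.-1 then rows p.1 p.2
               else oxor [seq rows r p.2 | r <- enum 'I_n & val r < n.-1]
  end.

(* Block error probability over BEC(eps), with the information vector       *)
(* uniformly distributed over {0,1}^k (represented by arrays vanishing off  *)
(* the info positions) and each code symbol erased independently with       *)
(* probability eps.  A block error occurs when some decision differs from   *)
(* the transmitted information bit (an erasure counts as an error).        *)

Definition decoder := forall ns : seq nat, (pos ns -> option bool) -> pos ns -> option bool.

Definition block_error (ns : seq nat) (dec : decoder) (u : {ffun pos ns -> bool})
  (E : {set pos ns}) : bool :=
  [exists p, info p && (dec ns (bec_out (encode u) E) p != Some (u p))].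

Definition msg_space (ns : seq nat) : {set {ffun pos ns -> bool}} :=
  [set u : {ffun pos ns -> bool} | [forall p : pos ns, ~~ info p ==> ~~ u p]].

Definition P_err (R : realFieldType) (eps : R) (ns : seq nat) (dec : decoder) : R :=
  \sum_(u in msg_space ns)
    (#|msg_space ns|%:R)^-1 *
    \sum_(E : {set pos ns} | block_error dec u E)
      eps ^+ #|E| * (1 - eps) ^+ (#|pos ns| - #|E|).

Definition P_SC (R : realFieldType) (eps : R) (ns : seq nat) : R :=
  P_err eps ns (@sc_dec).
Definition P_E (R : realFieldType) (eps : R) (ns : seq nat) : R :=
  P_err eps ns (@elias_dec).

From HB Require Import structures.
From mathcomp Require Import all_boot all_order all_algebra.
From mathcomp Require Import zify.
Set Implicit Arguments. Unset Strict Implicit. Unset Printing Implicit Defensive.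
Import Order.TTheory GRing.Theory Num.Theory.

(* Over the BEC, SC decoding never outputs a wrong bit: every value it knows is
   a XOR of channel symbols along parity checks of the product code, so it
   agrees with the transmitted codeword.  It also recovers every bit as soon as
   Elias' decoder recovers all information bits.  Indeed, when SC decodes row k
   of the outer SPC code, the rows before k are already known and the rows after
   k are as received, so it knows at least what the first step of Elias' sweep
   knows about row k; the remaining steps of that sweep act on row k exactly as
   Elias' decoder of the inner product code, and induction on the dimension
   applies.  So every erasure pattern causing an SC block error causes an Elias
   block error, and the sums defining the two probabilities compare termwise. *)

Definition oaddb (a b : option bool) : option bool :=
  if (a, b) is (Some x, Some y) then Some (x (+) y) else None.

Lemma oaddbA : associative oaddb. Proof. by move=> [[]|] [[]|] [[]|]. Qed.
Lemma oaddbC : commutative oaddb. Proof. by move=> [[]|] [[]|]. Qed.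
Lemma oadd0b : left_id (Some false) oaddb. Proof. by move=> [[]|]. Qed.

HB.instance Definition _ :=
  Monoid.isComLaw.Build (option bool) (Some false) oaddb oaddbA oaddbC oadd0b.

Lemma foldr_enum_cond (V : Type) (idx : V) (op : Monoid.com_law idx)
    (T : finType) (P : pred T) (f : T -> V) :
  foldr op idx [seq f q | q <- enum T & P q] = \big[op/idx]_(q | P q) f q.
Proof. by rewrite foldrE big_map big_filter big_enum_cond. Qed.

Lemma oxor_enum (T : finType) (P : pred T) (f : T -> option bool) :
  oxor [seq f q | q <- enum T & P q] = \big[oaddb/Some false]_(q | P q) f q.
Proof. exact: (foldr_enum_cond (Monoid.ComLaw.clone _ _ oaddb _)). Qed.

Lemma xors_enum (T : finType) (P : pred T) (f : T -> bool) :
  xors [seq f q | q <- enum T & P q] = \big[addb/false]_(q | P q) f q.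
Proof. exact: (foldr_enum_cond (Monoid.ComLaw.clone _ _ addb _)). Qed.

Section Lines.

Variables (V : Type) (idx : V) (op : Monoid.com_law idx).
Variables (n : nat) (ns : seq nat) (r : 'I_n) (j : pos ns) (f : pos (n :: ns) -> V).

Lemma big_same_line_succ l :
  \big[op/idx]_(q | @same_line (n :: ns) l.+1 (r, j) q && (q != (r, j))) f q
  = \big[op/idx]_(q | same_line l j q && (q != j)) f (r, q).
Proof.
transitivity (\big[op/idx]_(a | a == r)
   \big[op/idx]_(b | same_line l j b && ((a, b) != (r, j))) f (a, b)); last first.
  by rewrite big_pred1_eq; apply: eq_bigl => b; rewrite xpair_eqE eqxx.
rewrite pair_big_dep; apply: eq_big; last by case.
by case=> a b /=; rewrite [r == a]eq_sym; case: eqP => //= ->.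
Qed.

Lemma big_same_line0 :
  \big[op/idx]_(q | @same_line (n :: ns) 0 (r, j) q && (q != (r, j))) f q
  = \big[op/idx]_(r' | r' != r) f (r', j).
Proof.
transitivity (\big[op/idx]_(a | a != r) \big[op/idx]_(b | b == j) f (a, b)).
  rewrite pair_big_dep; apply: eq_big; last by case.
  case=> a b /=; rewrite xpair_eqE [j == b]eq_sym.
  by case: (b == j); rewrite ?andbT ?andbF.
by apply: eq_bigr => a _; rewrite big_pred1_eq.
Qed.

End Lines.

Lemma foldl_map (A X Y : Type) (f : A -> X -> A) (h : Y -> X) z s :
  foldl f z (map h s) = foldl (fun z y => f z (h y)) z s.
Proof. by elim: s z => //= y s IH z. Qed.

Lemma foldl_rel (A B X : Type) (Rel : A -> B -> Prop) (f : A -> X -> A)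
    (g : B -> X -> B) s a b :
  (forall a b x, Rel a b -> Rel (f a x) (g b x)) ->
  Rel a b -> Rel (foldl f a s) (foldl g b s).
Proof. by move=> fg; elim: s a b => //= x s IH a b ab; apply/IH/fg. Qed.

Lemma foldl_ind (A X : Type) (P : A -> Prop) (f : A -> X -> A) s a :
  (forall a x, P a -> P (f a x)) -> P a -> P (foldl f a s).
Proof. by move=> fP; elim: s a => //= x s IH a Pa; apply/IH/fP. Qed.

Definition parity_fills (ns : seq nat) (s : seq nat) (c : pos ns -> bool) :
  pos ns -> bool :=
  foldl (fun c l => parity_fill l c) c s.

Definition parity_sweep (ns : seq nat) (c : pos ns -> bool) : pos ns -> bool :=
  parity_fills (iota 0 (size ns)) c.

Lemma encodeE ns (u : pos ns -> bool) :
  encode u = parity_sweep (fun p => info p && u p).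
Proof. by []. Qed.

Lemma eq_parity_fill ns l (c c' : pos ns -> bool) :
  c =1 c' -> parity_fill l c =1 parity_fill l c'.
Proof.
move=> cc' p; rewrite /parity_fill !xors_enum cc'.
by under eq_bigr do rewrite cc'.
Qed.

Lemma eq_parity_fills ns s (c c' : pos ns -> bool) :
  c =1 c' -> parity_fills s c =1 parity_fills s c'.
Proof. by apply: foldl_rel => a b l; apply: eq_parity_fill. Qed.

Lemma parity_fill_row n ns l (c : pos (n :: ns) -> bool) (c' : pos ns -> bool)
    (r : 'I_n) :
  (forall j, c (r, j) = c' j) ->
  forall j, @parity_fill (n :: ns) l.+1 c (r, j) = parity_fill l c' j.
Proof.
move=> cc' j; rewrite /parity_fill !xors_enum big_same_line_succ /= cc'.
by under eq_bigr do rewrite cc'.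
Qed.

Lemma parity_sweep_row n ns (c : pos (n :: ns) -> bool) (r : 'I_n) (j : pos ns) :
  parity_sweep c (r, j) = parity_sweep (fun j => @parity_fill (n :: ns) 0 c (r, j)) j.
Proof.
rewrite /parity_sweep /parity_fills /= -[1]/(1 + 0) iotaDl foldl_map.
move: j; apply: (foldl_rel (Rel := fun a b => forall j, a (r, j) = b j)) => //.
by move=> a b l; apply: parity_fill_row.
Qed.

Lemma info_is_lastF ns l (p : pos ns) : info p -> is_last l p = false.
Proof.
elim: ns l p => [|n ns IH] [|l] p //= /andP[lt_p1 info_p2]; last exact: IH.
by apply: contraTF lt_p1 => /eqP ->; rewrite ltnn.
Qed.

Lemma parity_fills_info ns s (c : pos ns -> bool) p :
  info p -> parity_fills s c p = c p.
Proof.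
move=> info_p; elim: s c => //= l s IH c.
by rewrite IH /parity_fill info_is_lastF.
Qed.

Lemma encode_info ns (u : pos ns -> bool) p : info p -> encode u p = u p.
Proof. by move=> info_p; rewrite encodeE /parity_sweep parity_fills_info // info_p. Qed.

Lemma parity_fills_addb ns s (a b : pos ns -> bool) :
  parity_fills s (fun p => a p (+) b p) =1
  (fun p => parity_fills s a p (+) parity_fills s b p).
Proof.
elim: s a b => //= l s IH a b p; rewrite -IH; apply: eq_parity_fills => q.
by rewrite /parity_fill !xors_enum; case: ifP => // _; rewrite big_split.
Qed.

Lemma parity_fills0 ns s : parity_fills s (fun _ : pos ns => false) =1 (fun _ => false).
Proof.
elim: s => //= l s IH p; rewrite -(IH p); apply: eq_parity_fills => q.
by rewrite /parity_fill xors_enum; case: ifP => // _; rewrite big1.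
Qed.

Lemma parity_fills_sum ns s I (rs : seq I) (g : I -> pos ns -> bool) p :
  \big[addb/false]_(i <- rs) parity_fills s (g i) p =
  parity_fills s (fun q => \big[addb/false]_(i <- rs) g i q) p.
Proof.
elim: rs p => [|i rs IH] p.
  rewrite big_nil (eq_parity_fills _ (c' := fun _ => false)) ?parity_fills0 //.
  by move=> q; rewrite big_nil.
rewrite big_cons IH -parity_fills_addb; apply: eq_parity_fills => q.
by rewrite big_cons.
Qed.

Lemma sum_parity_fill0_col n ns (c : pos (n :: ns) -> bool) (j : pos ns) :
  \big[addb/false]_(r : 'I_n) @parity_fill (n :: ns) 0 c (r, j) = false.
Proof.
case: n c j => [|n] c j; first by rewrite big_ord0.
have fill_ne r : r != ord_max -> @parity_fill (n.+1 :: ns) 0 c (r, j) = c (r, j).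
  by move=> ne_r; rewrite /parity_fill /= ifN.
rewrite (bigD1 ord_max) //= (eq_bigr _ fill_ne).
by rewrite /parity_fill /= eqxx xors_enum big_same_line0 addbb.
Qed.

Fixpoint spc_codeword (ns : seq nat) : (pos ns -> bool) -> Prop :=
  match ns return (pos ns -> bool) -> Prop with
  | [::] => fun _ => True
  | n :: ns' => fun c =>
      (forall j : pos ns', \big[addb/false]_(r : 'I_n) c (r, j) = false) /\
      (forall r : 'I_n, spc_codeword (fun j => c (r, j)))
  end.

Lemma eq_spc_codeword ns (c c' : pos ns -> bool) :
  c =1 c' -> spc_codeword c -> spc_codeword c'.
Proof.
elim: ns c c' => [|n ns IH] c c' //= cc' [col row]; split=> [j|r].
  by under eq_bigr do rewrite -cc'.
by apply: IH (row r) => j.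
Qed.

Lemma parity_sweep_codeword ns (c : pos ns -> bool) : spc_codeword (parity_sweep c).
Proof.
elim: ns c => [|n ns IH] c //=.
set g := fun r j => @parity_fill (n :: ns) 0 c (r, j).
have sweep_row r j : parity_sweep c (r, j) = parity_sweep (g r) j.
  exact: parity_sweep_row.
split=> [j|r]; last first.
  by apply: eq_spc_codeword (IH (g r)) => j; rewrite sweep_row.
under eq_bigr do rewrite sweep_row.
rewrite parity_fills_sum (eq_parity_fills _ (c' := fun _ => false)).
  exact: parity_fills0.
exact: sum_parity_fill0_col.
Qed.

(* The local definitions in the recursive case of [sc_dec], named so that
   [sc_dec_cons] holds by conversion. *)
Section SCRows.

Variables (n : nat) (ns : seq nat) (y : pos (n :: ns) -> option bool).

Definition sc_obs (d : 'I_n -> pos ns -> option bool) (r : 'I_n) :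
  pos ns -> option bool :=
  fun j => if y (r, j) is Some b then Some b
           else oxor ([seq d r' j | r' <- enum 'I_n & val r' < val r]
                      ++ [seq y (r', j) | r' <- enum 'I_n & val r < val r']).

Definition sc_step (d : 'I_n -> pos ns -> option bool) (r : 'I_n) :
  'I_n -> pos ns -> option bool :=
  fun r' => if r' == r then sc_dec (sc_obs d r) else d r'.

Definition sc_rows : 'I_n -> pos ns -> option bool :=
  foldl sc_step (fun _ _ => None) [seq r <- enum 'I_n | val r < n.-1].

Lemma sc_dec_cons (r : 'I_n) (j : pos ns) :
  sc_dec y (r, j) =
  if val r < n.-1 then sc_rows r j
  else oxor [seq sc_rows r' j | r' <- enum 'I_n & val r' < n.-1].
Proof. by []. Qed.

End SCRows.

Lemma isSome_oxor s : isSome (oxor s) = all isSome s.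
Proof. by elim: s => [|[a|] s IH] //=; rewrite -IH; case: (oxor s). Qed.

Lemma oxor_cat s1 s2 : oxor (s1 ++ s2) = oaddb (oxor s1) (oxor s2).
Proof.
by elim: s1 => [|a s1 IH] /=; [rewrite oadd0b | rewrite IH; apply: oaddbA].
Qed.

Definition consistent (T : Type) (y : T -> option bool) (c : T -> bool) :=
  forall p b, y p = Some b -> b = c p.

Lemma oxor_consistent (T : Type) (y : T -> option bool) (c : T -> bool) s b :
  consistent y c -> oxor (map y s) = Some b -> b = xors (map c s).
Proof.
move=> yc; elim: s b => [|p s IH] b /=; first by case.
case e1: (y p) => [b1|] //; case e2: (oxor (map y s)) => [b2|] //= [<-].
by rewrite (yc _ _ e1) (IH _ e2).
Qed.

Lemma addb_sum_lt_gt n (g : 'I_n -> bool) (r : 'I_n) :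
  \big[addb/false]_(r' : 'I_n) g r' = false ->
  \big[addb/false]_(r' | val r' < val r) g r' (+)
  \big[addb/false]_(r' | val r < val r') g r' = g r.
Proof.
rewrite (bigD1 r) //= (bigID (fun r' => val r' < val r)) /=.
rewrite (eq_bigl (fun r' => val r' < val r)) => [|r'].
  rewrite [X in _ (+) (_ (+) X)](eq_bigl (fun r' => val r < val r')) => [|r'].
    by move/(congr1 (addb (g r))); rewrite addKb addbF.
  by rewrite -val_eqE /=; case: ltngtP.
by rewrite -val_eqE /=; case: ltngtP.
Qed.

Lemma sc_obs_consistent n ns (y : pos (n :: ns) -> option bool)
    (c : pos (n :: ns) -> bool) (d : 'I_n -> pos ns -> option bool) (r : 'I_n) :
  (forall j, \big[addb/false]_(r' : 'I_n) c (r', j) = false) ->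
  consistent y c -> (forall r', consistent (d r') (fun j => c (r', j))) ->
  consistent (sc_obs y d r) (fun j => c (r, j)).
Proof.
move=> col yc dc j b; rewrite /sc_obs.
case e: (y (r, j)) => [b0|]; first by case=> <-; apply: yc e.
rewrite oxor_cat; case e1: (oxor _) => [b1|] //; case e2: (oxor _) => [b2|] //= [<-].
rewrite (oxor_consistent (c := fun r' => c (r', j)) _ e1); last by move=> r'; apply: dc.
rewrite (oxor_consistent (c := fun r' => c (r', j)) _ e2); last by move=> r'; apply: yc.
by rewrite !xors_enum addb_sum_lt_gt.
Qed.

Lemma sc_dec_consistent ns (y : pos ns -> option bool) (c : pos ns -> bool) :
  spc_codeword c -> consistent y c -> consistent (sc_dec y) c.
Proof.
elim: ns y c => [|n ns IH] y c; first by move=> _.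
case=> col row yc.
have rows_ok r : consistent (sc_rows y r) (fun j => c (r, j)).
  move: r; apply: (foldl_ind (P := fun d =>
    forall r, consistent (d r) (fun j => c (r, j)))) => // d r0 dc r.
  rewrite /sc_step; case: eqP => [->|_]; last exact: dc.
  exact: IH (row r0) (sc_obs_consistent col yc dc).
case=> r j b; rewrite sc_dec_cons; case: ifP => [_|last_r]; first exact: rows_ok.
move=> e; rewrite (oxor_consistent (c := fun r' => c (r', j)) _ e); last first.
  by move=> r'; apply: rows_ok.
have eq_r : r = n.-1 :> nat by move: (ltn_ord r) (negbT last_r) => /=; lia.
have no_later : \big[addb/false]_(r' | val r < val r') c (r', j) = false.
  by rewrite big_pred0 // => r' /=; apply/negbTE; move: (ltn_ord r'); lia.
rewrite xors_enum -(addb_sum_lt_gt r (col j)) no_later addbF.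
by apply: eq_bigl => r' /=; rewrite eq_r.
Qed.

Definition known_le (T : Type) (y y' : T -> option bool) :=
  forall p, isSome (y p) -> isSome (y' p).

Lemma sc_obs_mono n ns (y y' : pos (n :: ns) -> option bool)
    (d d' : 'I_n -> pos ns -> option bool) (r : 'I_n) :
  known_le y y' -> (forall r', known_le (d r') (d' r')) ->
  known_le (sc_obs y d r) (sc_obs y' d' r).
Proof.
move=> yy' dd' j; rewrite /sc_obs.
case e: (y (r, j)) => [b|].
  by have := yy' (r, j); rewrite e; case: (y' (r, j)) => // /(_ isT).
case: (y' (r, j)) => // ; rewrite !isSome_oxor !all_cat !all_map.
case/andP=> known_d known_y; apply/andP; split.
  by apply: sub_all known_d => r'; apply: dd'.
by apply: sub_all known_y => r'; apply: yy'.
Qed.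

Lemma sc_dec_mono ns (y y' : pos ns -> option bool) :
  known_le y y' -> known_le (sc_dec y) (sc_dec y').
Proof.
elim: ns y y' => [|n ns IH] y y' yy'; first exact: yy'.
have rows_le r : known_le (sc_rows y r) (sc_rows y' r).
  move: r; apply: (foldl_rel (Rel := fun d d' =>
    forall r, known_le (d r) (d' r))) => // d d' r0 dd' r.
  rewrite /sc_step; case: eqP => _; last exact: dd'.
  exact/IH/sc_obs_mono.
case=> r j; rewrite !sc_dec_cons; case: ifP => _; first exact: rows_le.
by rewrite !isSome_oxor !all_map; apply: sub_all => r'; apply: rows_le.
Qed.

Lemma elias_step_row n ns l (y : pos (n :: ns) -> option bool)
    (y' : pos ns -> option bool) (r : 'I_n) :
  (forall j, y (r, j) = y' j) ->
  forall j, @elias_step (n :: ns) l.+1 y (r, j) = elias_step l y' j.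
Proof.
move=> yy' j; rewrite /elias_step !oxor_enum big_same_line_succ /= yy'.
by under eq_bigr do rewrite yy'.
Qed.

Lemma elias_dec_row n ns (y : pos (n :: ns) -> option bool) (r : 'I_n) (j : pos ns) :
  elias_dec y (r, j) = elias_dec (fun j => @elias_step (n :: ns) 0 y (r, j)) j.
Proof.
rewrite /elias_dec /= -[1]/(1 + 0) iotaDl foldl_map.
move: j; apply: (foldl_rel (Rel := fun a b => forall j, a (r, j) = b j)) => //.
by move=> a b l; apply: elias_step_row.
Qed.

Lemma sc_obs_known n ns (y : pos (n :: ns) -> option bool)
    (d : 'I_n -> pos ns -> option bool) (k : 'I_n) :
  (forall r, val r < val k -> forall j, isSome (d r j)) ->
  known_le (fun j => @elias_step (n :: ns) 0 y (k, j)) (sc_obs y d k).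
Proof.
move=> known_d j; rewrite /elias_step /sc_obs; case: (y (k, j)) => //.
rewrite !isSome_oxor all_cat !all_map => /allP known_line; apply/andP; split.
  by apply/allP => r; rewrite mem_filter => /andP[lt_r _]; apply: known_d.
apply/allP => r; rewrite mem_filter => /andP[gt_r _]; apply: (known_line (r, j)).
by rewrite mem_filter mem_enum /= eqxx xpair_eqE -val_eqE /= gtn_eqF.
Qed.

Lemma filter_ord_lt_succ n k (lt_k_n : k < n) :
  [seq r <- enum 'I_n | val r < k.+1] =
  rcons [seq r <- enum 'I_n | val r < k] (Ordinal lt_k_n).
Proof.
apply: (inj_map val_inj); rewrite map_rcons.
rewrite -!(filter_map val (fun i => i < _)) val_enum_ord.
by rewrite !(filter_iota_ltn 0) ?(ltnW lt_k_n) // -addn1 iotaD cats1.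
Qed.

Lemma sc_dec_complete ns (y : pos ns -> option bool) :
  (forall p, info p -> isSome (elias_dec y p)) -> forall p, isSome (sc_dec y p).
Proof.
elim: ns y => [|n ns IH] y elias_info; first by move=> p; apply: (elias_info p).
have rows_known k : k <= n.-1 -> forall r : 'I_n, val r < k -> forall j,
    isSome (foldl (sc_step y) (fun _ _ => None) [seq r <- enum 'I_n | val r < k] r j).
  elim: k => [|k IHk] // le_k_n r.
  have lt_k_n : k < n by move: le_k_n; case: (n) => //= m; lia.
  rewrite (filter_ord_lt_succ lt_k_n) foldl_rcons /sc_step.
  case: eqP => [-> _ j|/eqP ne_r lt_r]; last first.
    by apply: IHk; [lia | move: ne_r lt_r; rewrite -val_eqE /=; lia].
  have known_prev r' : val r' < k -> forall j', isSome (
      foldl (sc_step y) (fun _ _ => None) [seq r <- enum 'I_n | val r < k] r' j').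
    by move=> lt_r'; apply: IHk => //; lia.
  apply: (sc_dec_mono (sc_obs_known (k := Ordinal lt_k_n) known_prev)).
  apply: IH => j' info_j'; rewrite -elias_dec_row; apply: elias_info.
  by rewrite /= info_j' andbT; move: le_k_n; lia.
case=> r j; rewrite sc_dec_cons; case: ifP => [lt_r|_]; first exact: rows_known.
rewrite isSome_oxor all_map; apply/allP => r' /=.
by rewrite mem_filter => /andP[lt_r' _]; apply: rows_known.
Qed.

Lemma sc_block_error_elias ns (u : {ffun pos ns -> bool}) (E : {set pos ns}) :
  block_error (@sc_dec) u E -> block_error (@elias_dec) u E.
Proof.
apply: contraTT => /existsPn elias_ok; apply/existsPn => p.
case info_p: (info p) => //=; rewrite negbK.
set y := bec_out (encode u) E.
have y_encode : consistent y (encode u).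
  by move=> q b; rewrite /y /bec_out; case: ifP => // _ [<-].
have sc_known q : isSome (sc_dec y q).
  apply: sc_dec_complete q => q info_q.
  by move: (elias_ok q); rewrite info_q negbK => /eqP ->.
have sc_ok : consistent (sc_dec y) (encode u).
  exact: sc_dec_consistent (parity_sweep_codeword _) y_encode.
case e: (sc_dec y p) (sc_known p) => [b|] // _.
by rewrite (sc_ok _ _ e) encode_info.
Qed.

Unset Implicit Arguments.
Local Open Scope ring_scope.

Theorem theorem1 (R : realFieldType) (ns : seq nat) (eps : R) :
  all (fun n => 1 < n)%N ns -> 0 <= eps <= 1 ->
  P_SC eps ns <= P_E eps ns.
Proof.
(* The inclusion of error events holds for all component lengths. *)
move=> _ /andP[eps_ge0 eps_le1].
rewrite /P_SC /P_E /P_err; apply: ler_sum => u _.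
apply: ler_wpM2l; first by rewrite invr_ge0 ler0n.
rewrite [leRHS](bigID (block_error (@sc_dec) u)) /=.
rewrite -[leLHS](eq_bigl _ _ (fun E => andb_idl (@sc_block_error_elias ns u E))).
rewrite lerDl sumr_ge0 // => E _.
by rewrite mulr_ge0 // exprn_ge0 // subr_ge0.
Qed.
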